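(* Let $X$ be a finite quandle with connected components $C_1,\dots,C_k$, let $s=(x_1,\dots,x_n)\in X^n$, and let $n_j=|\{1\le i\le n:x_i\in C_j\}|$. Suppose $n_j>|C_j|$ for some $1\le j\le k$. Then the image in $S_n$ of the stabilizer of $s$ in $B_n$ is not contained in $A_n$.
   Context: A quandle is a set $X$ with an operation $x^y$ such that $x\mapsto x^y$ is bijective for each $y$, $(z^x)^y=(z^y)^{x^y}$ and $x^x=x$; its connected components are the classes of the smallest equivalence relation with $x\sim x^y$. $B_n$ acts on $X^n$ from the right by $(\dots,x_i,x_{i+1},\dots)^{\sigma_i}=(\dots,x_{i+1},x_i^{x_{i+1}},\dots)$, and $B_n\to S_n$ sends $\sigma_i\mapsto(i\ i+1)$. *)

From mathcomp Require Import all_boot all_order all_fingroup all_solvable.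
Set Implicit Arguments. Unset Strict Implicit. Unset Printing Implicit Defensive.

Definition is_quandle (X : Type) (op : X -> X -> X) : Prop :=
  [/\ forall y, bijective (fun x => op x y),
      forall x y z, op (op z x) y = op (op z y) (op x y)
    & forall x, op x x = x].

Definition qstep (X : finType) (op : X -> X -> X) : rel X :=
  fun a b => [exists c, (b == op a c) || (a == op b c)].

(* The smallest equivalence relation with x ~ x^y: reflexive-transitive
   closure of the symmetric one-step relation. *)
Definition qconn (X : finType) (op : X -> X -> X) : rel X :=
  connect (qstep op).

Definition qcomp (X : finType) (op : X -> X -> X) (x : X) : {set X} :=
  [set y | qconn op x y].

Definition qinv (X : finType) (op : X -> X -> X) (b a : X) : X :=
  odflt b [pick z | op z a == b].

Definition getq (X : Type) (n : nat) (s : {ffun 'I_n -> X}) (j : nat) (d : X) : X :=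
  odflt d (omap s (insub j)).

(* A letter (i, b) of a braid word: sigma_{i+1} (0-based index i, i.+1 < n)
   if b = true, its inverse if b = false. *)
Definition letter_ok (n : nat) (g : 'I_n * bool) : bool := g.1.+1 < n.

(* Right action of a letter on X^n:
   (.., x_i, x_{i+1}, ..)^{sigma_i} = (.., x_{i+1}, x_i^{x_{i+1}}, ..). *)
Definition act_letter (X : finType) (op : X -> X -> X) (n : nat)
    (s : {ffun 'I_n -> X}) (g : 'I_n * bool) : {ffun 'I_n -> X} :=
  let i := val g.1 in
  if g.2 then
    [ffun k : 'I_n => if val k == i then getq s i.+1 (s k)
                      else if val k == i.+1 then op (getq s i (s k)) (s k)
                      else s k]
  else
    [ffun k : 'I_n => if val k == i then qinv op (getq s i.+1 (s k)) (s k)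
                      else if val k == i.+1 then getq s i (s k)
                      else s k].

Definition act_word (X : finType) (op : X -> X -> X) (n : nat)
    (s : {ffun 'I_n -> X}) (w : seq ('I_n * bool)) : {ffun 'I_n -> X} :=
  foldl (@act_letter X op n) s w.

Definition perm_letter (n : nat) (g : 'I_n * bool) : {perm 'I_n} :=
  tperm g.1 (odflt g.1 (insub (val g.1).+1)).

Definition perm_word (n : nat) (w : seq ('I_n * bool)) : {perm 'I_n} :=
  (\prod_(g <- w) perm_letter g)%g.

(* By pigeonhole two entries x_i = x_j (i < j) of s coincide.  If j = i + 1,
   sigma_i already fixes s, because a^a = a.  Otherwise sigma_{j-1} moves x_j
   to position j - 1 without touching x_i, and conjugating a stabilizer of the
   new tuple by sigma_{j-1} gives a stabilizer of s.  The braids obtained are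
   words of odd length, whose images in S_n are odd permutations. *)
From mathcomp Require Import all_boot all_order all_fingroup all_solvable.
From mathcomp Require Import zify.

Lemma getq_ord (X : Type) n (s : {ffun 'I_n -> X}) (k : 'I_n) d :
  getq s k d = s k.
Proof. by rewrite /getq insubT // => ? /=; congr (s _); apply: val_inj. Qed.

Lemma odd_perm_word n (w : seq ('I_n * bool)) :
  all (@letter_ok n) w -> odd_perm (perm_word w) = odd (size w).
Proof.
elim: w => [|g w IHw] /=; first by rewrite /perm_word big_nil odd_perm1.
case/andP=> g_ok w_ok; rewrite /perm_word big_cons odd_permM -/(perm_word w).
rewrite IHw // /perm_letter insubT //= odd_tperm.
suff -> : g.1 != Sub g.1.+1 g_ok by [].
by apply/eqP=> /(congr1 val) /= /eqP; rewrite eqn_leq ltnn andbF.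
Qed.

Lemma exists_collision (aT rT : finType) (f : aT -> rT) (C : {set rT}) :
  #|C| < #|[set x | f x \in C]| -> exists x y, x != y /\ f x = f y.
Proof.
move=> lt_C; have /injectivePn[x [y neq_xy fxy]] : ~~ injectiveb f.
  apply: contraTN lt_C => /injectiveP f_inj; rewrite -leqNgt -(card_imset _ f_inj).
  by apply/subset_leq_card/subsetP=> z /imsetP[x]; rewrite inE => Cfx ->.
by exists x, y.
Qed.

Section BraidAction.
Variables (X : finType) (op : X -> X -> X) (n : nat).
Implicit Types (s : {ffun 'I_n -> X}) (i j k : 'I_n).
Hypothesis op_inj : forall y, injective (op^~ y).
Hypothesis op_idem : idempotent_op op.

Lemma act_letter_posE {i j} : j = i.+1 :> nat -> forall s k,
  act_letter op s (i, true) k =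
    if k == i then s j else if k == j then op (s i) (s j) else s k.
Proof.
move=> ji s k; rewrite /act_letter ffunE /= -ji !getq_ord.
rewrite -[(k : nat) == i]/(k == i) -[(k : nat) == j]/(k == j).
by case: (k =P i) => // _; case: (k =P j) => [->|].
Qed.

Lemma act_letter_negE {i j} : j = i.+1 :> nat -> forall s k,
  act_letter op s (i, false) k =
    if k == i then qinv op (s j) (s i) else if k == j then s i else s k.
Proof.
move=> ji s k; rewrite /act_letter ffunE /= -ji !getq_ord.
rewrite -[(k : nat) == i]/(k == i) -[(k : nat) == j]/(k == j).
by case: (k =P i) => [-> //|_]; case: (k =P j).
Qed.

Lemma act_letterK {i j} : j = i.+1 :> nat -> forall s,
  act_letter op (act_letter op s (i, true)) (i, false) = s.
Proof.
move=> ji s; have neq_ji : j != i by apply/eqP=> eq_ji; move: ji; rewrite eq_ji; lia.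
apply/ffunP=> k; rewrite (act_letter_negE ji) !(act_letter_posE ji) eqxx.
rewrite (negbTE neq_ji) eqxx.
case: eqP => [->|_]; last by case: eqP => [->|].
rewrite /qinv; case: pickP => [z /eqP/op_inj //|no_preimage].
by have := no_preimage (s i); rewrite eqxx.
Qed.

Lemma act_letter_repeat {i j} : j = i.+1 :> nat -> forall s,
  s i = s j -> act_letter op s (i, true) = s.
Proof.
move=> ji s sij; apply/ffunP=> k; rewrite (act_letter_posE ji).
by case: eqP => [->|_]; [|case: eqP => [->|]]; rewrite // sij op_idem.
Qed.

Lemma odd_stabilizer_of_repeat s i j :
  i < j -> s i = s j ->
  exists w, [/\ all (@letter_ok n) w, act_word op s w = s & odd (size w)].
Proof.
move=> lt_ij; have [d] : exists d, j = i + d.+1 :> nat by exists (j - i.+1); lia.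
elim: d s j {lt_ij} => [|d IHd] s j ji sij.
  rewrite addn1 in ji; exists [:: (i, true)]; split=> //=.
    by rewrite andbT /letter_ok /= -ji.
  exact: act_letter_repeat ji s sij.
have lt_kn : i + d.+1 < n by have := ltn_ord j; lia.
set k := Ordinal lt_kn; have jk : j = k.+1 :> nat by rewrite ji addnS.
set t := act_letter op s (k, true).
have tki : t i = s i.
  rewrite /t (act_letter_posE jk) -[i == k]/(i == k :> nat) -[i == j]/(i == j :> nat).
  by rewrite !ifF //=; apply/eqP; lia.
have tkj : t k = s j by rewrite /t (act_letter_posE jk) eqxx.
have [w [w_ok tw odd_w]] := IHd t k (erefl _) (etrans tki (etrans sij (esym tkj))).
exists ((k, true) :: rcons w (k, false)); split.
- by rewrite /= all_rcons w_ok /letter_ok /= -jk ltn_ord.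
- by rewrite /act_word /= foldl_rcons -/(act_word _ _ _) tw (act_letterK jk).
- by rewrite /= size_rcons /= negbK.
Qed.

End BraidAction.

Theorem corollary4p36 (X : finType) (op : X -> X -> X) (n : nat)
    (s : {ffun 'I_n -> X}) :
  is_quandle op ->
  (exists c : X,
     #|qcomp op c| < #|[set i : 'I_n | s i \in qcomp op c]|) ->
  exists w : seq ('I_n * bool),
    [/\ all (@letter_ok n) w,
        act_word op s w = s
      & perm_word w \notin @Alt 'I_n].
Proof.
case=> op_bij _ op_idem [c /exists_collision [i [j [neq_ij sij]]]].
have op_inj y : injective (op^~ y) by apply: bij_inj.
suff [w [w_ok sw odd_w]] :
    exists w, [/\ all (@letter_ok n) w, act_word op s w = s & odd (size w)].
  by exists w; split; rewrite // Alt_even negbK odd_perm_word.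
case: (ltngtP i j) => [lt_ij|lt_ji|eq_ij].
- exact: odd_stabilizer_of_repeat op_inj op_idem s i j lt_ij sij.
- exact: odd_stabilizer_of_repeat op_inj op_idem s j i lt_ji (esym sij).
- by case/eqP: neq_ij; apply: val_inj.
Qed.
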